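(* Let $m,k\in\mathbb{N}$ and let $\beta\in\mathbb{C}$ with $\beta,\ 2\beta+2m+2k+1\notin\mathbb{Z}_0^-$. Then \[ {}_3F_2\left[\begin{array}{r} -2m,\ 1+2m,\ \beta;\\ -2m-2k,\ 2\beta+2m+2k+1;\end{array}1\right]_{2m}=\frac{(1+2\beta+2k)_{2m}\left(1+k\right)_{2m}}{(1+2k)_{2m}\left(1+\beta+k\right)_{2m}}. \]
   Context: $\mathbb{N}=\{1,2,3,\dots\}$, $\mathbb{Z}_0^-=\{0,-1,-2,\dots\}$. For $a\in\mathbb{C}$ and $n\in\mathbb{N}_0$, $(a)_0=1$ and $(a)_n=a(a+1)\cdots(a+n-1)$. For $N\in\mathbb{N}_0$, ${}_3F_2\left[\begin{array}{r} a_1,a_2,a_3;\\ b_1,b_2;\end{array}z\right]_N=\sum_{n=0}^{N}\frac{(a_1)_n(a_2)_n(a_3)_n}{(b_1)_n(b_2)_n}\frac{z^n}{n!}$ (the sum of the first $N+1$ terms), defined whenever $(b_1)_n(b_2)_n\neq0$ for $0\le n\le N$. *)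

From HB Require Import structures.
From mathcomp Require Import all_boot all_order all_algebra.
From mathcomp Require Import complex.
From mathcomp Require Import reals.
Set Implicit Arguments. Unset Strict Implicit. Unset Printing Implicit Defensive.
Import Order.TTheory GRing.Theory Num.Theory.
Local Open Scope ring_scope.

Definition poch {F : comRingType} (a : F) (n : nat) : F :=
  \prod_(i < n) (a + i%:R).

Definition F32trunc {F : fieldType} (a1 a2 a3 b1 b2 z : F) (N : nat) : F :=
  \sum_(n < N.+1)
    (poch a1 n * poch a2 n * poch a3 n) / (poch b1 n * poch b2 n)
      * (z ^+ n / (n`!)%:R).

Definition in_Z0minus {F : ringType} (x : F) : Prop := exists n : nat, x = - n%:R.

(* For real beta > 0 and k >= 1 the sum S_m on the left satisfies a first-order
   recurrence in m, found by Zeilberger's algorithm: with t_m(n) its n-th term,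
   t_{m+1}(n) - lambda_m t_m(n) = G(n+1) - G(n) where G(n) = t_{m+1}(n) R(n) for an
   explicit rational certificate R, so summing over n telescopes to
   S_{m+1} = lambda_m S_m.  The closed form obeys the same recurrence and both
   sides equal 1 at m = 0; positivity of beta keeps every denominator nonzero.
   Cleared of denominators, both sides are polynomials in beta that agree at every
   positive integer, hence everywhere, which gives the identity for complex beta. *)

From HB Require Import structures.
From mathcomp Require Import all_boot all_order all_algebra.
From mathcomp Require Import complex.
From mathcomp Require Import reals.
From mathcomp Require Import ring lra.
Import Order.TTheory GRing.Theory Num.Theory.
Set Implicit Arguments. Unset Strict Implicit. Unset Printing Implicit Defensive.
Local Open Scope ring_scope.

Section Pochhammer.
Context {F : comNzRingType}.
Implicit Types (a : F) (n p : nat).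

Lemma poch0 a : poch a 0 = 1.
Proof. by rewrite /poch big_ord0. Qed.

Lemma pochSr a n : poch a n.+1 = poch a n * (a + n%:R).
Proof. by rewrite /poch big_ord_recr. Qed.

Lemma pochD a n p : poch a (n + p) = poch a n * poch (a + n%:R) p.
Proof.
elim: p => [|p IHp]; first by rewrite addn0 poch0 mulr1.
by rewrite addnS !pochSr IHp natrD addrA mulrA.
Qed.

Lemma poch2 a : poch a 2 = a * (a + 1).
Proof. by rewrite !pochSr poch0 mul1r addr0. Qed.

Lemma poch_add2 a n :
  poch (a + 2) n * (a * (a + 1)) = poch a n * ((a + n%:R) * (a + n%:R + 1)).
Proof. by rewrite -!poch2 mulrC -pochD addnC pochD. Qed.

Lemma poch_oppr_nat_eq0 j n : (j < n)%N -> poch (- j%:R : F) n = 0.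
Proof. by move=> ltjn; rewrite /poch (bigD1 (Ordinal ltjn)) //= addNr mul0r. Qed.

Lemma horner_poch (q : {poly F}) x n : (poch q n).[x] = poch q.[x] n.
Proof.
rewrite /poch horner_prod; apply: eq_bigr => i _.
by rewrite hornerD hornerMn hornerC.
Qed.

Lemma rmorph_poch (G : comNzRingType) (f : {rmorphism F -> G}) a n :
  f (poch a n) = poch (f a) n.
Proof. by rewrite rmorph_prod; apply: eq_bigr => i _; rewrite rmorphD rmorph_nat. Qed.

End Pochhammer.

Lemma poch_neq0 {F : idomainType} (a : F) n :
  (forall i, (i < n)%N -> a + i%:R != 0) -> poch a n != 0.
Proof. by move=> nz; apply/prodf_neq0 => i _; apply: nz. Qed.

Lemma poch_nat_neq0 {F : numDomainType} (c n : nat) : poch (c.+1%:R : F) n != 0.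
Proof. by apply: poch_neq0 => i _; rewrite -natrD pnatr_eq0. Qed.

Lemma poch_addn_neq0 {F : idomainType} (a : F) (c n : nat) :
  ~ in_Z0minus a -> poch (a + c%:R) n != 0.
Proof.
move=> aZ; apply: poch_neq0 => i _; apply: contra_not_neq aZ => /eqP eq0.
by exists (c + i)%N; apply/eqP; rewrite -addr_eq0 natrD addrA.
Qed.

Lemma poch_pos_neq0 {F : realFieldType} (a : F) n : 0 < a -> poch a n != 0.
Proof. by move=> a_gt0; apply: poch_neq0 => i _; have := ler0n F i; lra. Qed.

Lemma poch_neg_neq0 {F : realFieldType} (a : F) n : n%:R <= - a - 1 -> poch a n != 0.
Proof.
move=> le_n; apply: poch_neq0 => i lt_in; have : i.+1%:R <= n%:R :> F by rewrite ler_nat.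
by rewrite -natr1; lra.
Qed.

Lemma poch_shift2 {F : fieldType} (a c : F) n : c = a + 2 -> a != 0 -> a + 1 != 0 ->
  poch c n = poch a n * ((a + n%:R) * (a + n%:R + 1)) / (a * (a + 1)).
Proof. by move=> -> nz0 nz1; rewrite -poch_add2; field; rewrite nz0 nz1. Qed.

Lemma natr_fact_neq0 {F : numDomainType} n : (n`!)%:R != 0 :> F.
Proof. by rewrite pnatr_eq0 -lt0n fact_gt0. Qed.

Definition f32term {F : fieldType} (a1 a2 a3 b1 b2 z : F) (n : nat) : F :=
  (poch a1 n * poch a2 n * poch a3 n) / (poch b1 n * poch b2 n) * (z ^+ n / (n`!)%:R).

Lemma f32termS {F : numFieldType} (a1 a2 a3 b1 b2 z : F) n :
  poch b1 n.+1 != 0 -> poch b2 n.+1 != 0 ->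
  f32term a1 a2 a3 b1 b2 z n.+1 = f32term a1 a2 a3 b1 b2 z n *
    ((a1 + n%:R) * (a2 + n%:R) * (a3 + n%:R) * z
       / ((b1 + n%:R) * (b2 + n%:R) * (n%:R + 1))).
Proof.
rewrite !pochSr !mulf_eq0 !negb_or => /andP[nz1 nz1'] /andP[nz2 nz2'].
have nzn : n%:R + 1 != 0 :> F by rewrite natr1 pnatr_eq0.
rewrite /f32term !pochSr factS natrM exprS -natr1.
by field; rewrite nz1 nz1' nz2 nz2' natr_fact_neq0 nzn.
Qed.

Lemma rmorph_f32term {F G : fieldType} (f : {rmorphism F -> G}) (a1 a2 a3 b1 b2 z : F) n :
  f (f32term a1 a2 a3 b1 b2 z n) = f32term (f a1) (f a2) (f a3) (f b1) (f b2) (f z) n.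
Proof.
by rewrite /f32term !rmorphM !fmorphV !rmorphM !rmorph_poch rmorphXn rmorph_nat.
Qed.

Definition hterm {F : fieldType} (M K b : F) : nat -> F :=
  f32term (- (2 * M)) (1 + 2 * M) b (- (2 * M) - 2 * K) (2 * b + 2 * M + 2 * K + 1) 1.

Definition zratio {F : fieldType} (M K b : F) : F :=
  (1 + 2 * b + 2 * K + 2 * M) * (2 + 2 * b + 2 * K + 2 * M) * (1 + K + 2 * M) * (2 + K + 2 * M)
  / ((1 + 2 * K + 2 * M) * (2 + 2 * K + 2 * M) * (1 + b + K + 2 * M) * (2 + b + K + 2 * M)).

(* Zeilberger's certificate R(x), as produced by the algorithm. *)
Definition zcert {F : fieldType} (M K b x : F) : F :=
  x * (x + 2 * b + 2 * M + 2 * K + 2)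
  * (- (b + 4 * M + 2 * K + 3) * x ^+ 2 + (4 * M + 3) * (1 - b) * x
     + 2 * ((6 * M + 5) * (M + 1) + (4 * M + 3) * K) * b
     + (8 * M + 6) * K ^+ 2 + 2 * (12 * M ^+ 2 + 18 * M + 7) * K
     + 2 * (M + 1) * (2 * M + 1) * (4 * M + 3))
  / ((b + 2 * M + K + 1) * (b + 2 * M + K + 2) * (x + 2 * M + 1) * (x + 2 * M + 2)
     * (x - 2 * M - 2 * K - 2)).

Ltac field_nonzero := repeat (apply/andP; split); try assumption; lra.

Lemma hterm_succ {F : realFieldType} (M K b : F) n :
  0 <= M -> 1 <= K -> 0 < b -> n%:R <= 2 * M + 2 ->
  hterm (M + 1) K b n.+1 = hterm (M + 1) K b n *
    ((n%:R - 2 * M - 2) * (n%:R + 2 * M + 3) * (n%:R + b)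
     / ((n%:R - 2 * M - 2 * K - 2) * (n%:R + 2 * b + 2 * M + 2 * K + 3) * (n%:R + 1))).
Proof.
move=> M_ge0 K_ge1 b_gt0 le_n.
have nz1 : poch (- (2 * (M + 1)) - 2 * K) n.+1 != 0.
  by apply: poch_neg_neq0; rewrite -natr1; lra.
have nz2 : poch (2 * b + 2 * (M + 1) + 2 * K + 1) n.+1 != 0.
  by apply: poch_pos_neq0; lra.
rewrite /hterm f32termS //; congr (_ * _); rewrite mulr1; congr (_ * _ / _); ring.
Qed.

Lemma hterm_shift {F : realFieldType} (M K b : F) n :
  0 <= M -> 1 <= K -> 0 < b -> n%:R <= 2 * M + 2 ->
  hterm M K b n = hterm (M + 1) K b n *
    ((2 * M + 2 * K + 2) * (2 * M + 2 * K + 1) * (n%:R - 2 * M - 2) * (n%:R - 2 * M - 1)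
     * (n%:R + 2 * b + 2 * M + 2 * K + 1) * (n%:R + 2 * b + 2 * M + 2 * K + 2)
     / ((2 * b + 2 * M + 2 * K + 1) * (2 * b + 2 * M + 2 * K + 2)
        * (n%:R + 2 * M + 1) * (n%:R + 2 * M + 2)
        * (n%:R - 2 * M - 2 * K - 2) * (n%:R - 2 * M - 2 * K - 1))).
Proof.
move=> M_ge0 K_ge1 b_gt0 le_n; have n_ge0 := ler0n F n.
rewrite /hterm /f32term.
rewrite (@poch_shift2 _ (- (2 * (M + 1))) (- (2 * M))); [|ring|lra|lra].
rewrite (@poch_shift2 _ (- (2 * (M + 1)) - 2 * K) (- (2 * M) - 2 * K)); [|ring|lra|lra].
rewrite (@poch_shift2 _ (1 + 2 * M) (1 + 2 * (M + 1))); [|ring|lra|lra].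
rewrite (@poch_shift2 _ (2 * b + 2 * M + 2 * K + 1) (2 * b + 2 * (M + 1) + 2 * K + 1));
  [|ring|lra|lra].
have nz1 : poch (- (2 * (M + 1)) - 2 * K) n != 0 by apply: poch_neg_neq0; lra.
have nz2 : poch (2 * b + 2 * M + 2 * K + 1) n != 0 by apply: poch_pos_neq0; lra.
by field; rewrite nz1 nz2 natr_fact_neq0; field_nonzero.
Qed.

Lemma hterm_recurrence {F : realFieldType} (M K b : F) n :
  0 <= M -> 1 <= K -> 0 < b -> n%:R <= 2 * M + 2 ->
  let G j := hterm (M + 1) K b j * zcert M K b j%:R in
  hterm (M + 1) K b n - zratio M K b * hterm M K b n = G n.+1 - G n.
Proof.
move=> M_ge0 K_ge1 b_gt0 le_n G; have n_ge0 := ler0n F n.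
rewrite /G hterm_succ // (@hterm_shift _ M) // /zratio /zcert -natr1.
by field; field_nonzero.
Qed.

Definition hsum {F : fieldType} (k m : nat) (b : F) : F :=
  \sum_(n < (2 * m).+1) hterm m%:R k%:R b n.

Definition hrhs {F : fieldType} (k m : nat) (b : F) : F :=
  (poch (1 + 2 * b + 2 * k%:R) (2 * m) * poch (1 + k%:R) (2 * m))
  / (poch (1 + 2 * k%:R) (2 * m) * poch (1 + b + k%:R) (2 * m)).

Lemma hterm_eq0 {F : fieldType} m (K b : F) n : (2 * m < n)%N -> hterm m%:R K b n = 0.
Proof. by move=> lt_mn; rewrite /hterm /f32term -natrM poch_oppr_nat_eq0 // !mul0r. Qed.

Lemma hsum_recurrence {F : realFieldType} k m (b : F) : (0 < k)%N -> 0 < b ->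
  hsum k m.+1 b = zratio m%:R k%:R b * hsum k m b.
Proof.
move=> k_gt0 b_gt0.
have M_ge0 : 0 <= m%:R :> F := ler0n F m.
have K_ge1 : 1 <= k%:R :> F by rewrite ler1n.
pose G j := hterm m.+1%:R k%:R b j * zcert m%:R k%:R b j%:R.
have telescope : \sum_(n < (2 * m).+3)
    (hterm m.+1%:R k%:R b n - zratio m%:R k%:R b * hterm m%:R k%:R b n) = G (2 * m).+3 - G 0%N.
  rewrite -(big_mkord xpredT (fun n => hterm m.+1%:R k%:R b n - _ * hterm m%:R k%:R b n)).
  apply: telescope_sumr_eq => // n /andP[_ lt_n].
  rewrite /G -[m.+1%:R]natr1 hterm_recurrence //.
  have : (n <= 2 * m + 2)%N by rewrite -ltnS addn2.
  by rewrite -(ler_nat F) natrD natrM.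
have G0 : G 0%N = 0 by rewrite /G /zcert !mul0r mulr0.
have GN : G (2 * m).+3 = 0 by rewrite /G hterm_eq0 ?mul0r // mulnS.
have hsum_ext : hsum k m b = \sum_(n < (2 * m).+3) hterm m%:R k%:R b n.
  by rewrite /hsum [in RHS]big_ord_recr [in RHS]big_ord_recr /= !hterm_eq0 // !addr0.
move: telescope; rewrite G0 GN subr0 sumrB -mulr_sumr -hsum_ext => /eqP.
by rewrite subr_eq0 => /eqP <-; rewrite /hsum mulnS.
Qed.

Lemma hrhs_recurrence {F : realFieldType} k m (b : F) : (0 < k)%N -> 0 < b ->
  hrhs k m.+1 b = zratio m%:R k%:R b * hrhs k m b.
Proof.
move=> k_gt0 b_gt0.
have M_ge0 : 0 <= m%:R :> F := ler0n F m.
have K_ge1 : 1 <= k%:R :> F by rewrite ler1n.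
have nz1 : poch (1 + 2 * k%:R) (2 * m) != 0 :> F by apply: poch_pos_neq0; lra.
have nz2 : poch (1 + b + k%:R) (2 * m) != 0 by apply: poch_pos_neq0; lra.
rewrite /hrhs /zratio mulnS !pochSr -[(2 * m).+1%:R]natr1 natrM.
by field; field_nonzero.
Qed.

Lemma hsum_hrhs_pos {F : realFieldType} k m (b : F) : (0 < k)%N -> 0 < b ->
  hsum k m b = hrhs k m b.
Proof.
move=> k_gt0 b_gt0; elim: m => [|m IHm].
  by rewrite /hsum /hrhs big_ord1 /hterm /f32term !poch0 expr0 !mulr1 invr1 !mulr1.
by rewrite hsum_recurrence // hrhs_recurrence // IHm.
Qed.

Lemma rmorph_hsum {F G : fieldType} (f : {rmorphism F -> G}) k m (b : F) :
  f (hsum k m b) = hsum k m (f b).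
Proof.
rewrite rmorph_sum; apply: eq_bigr => n _; rewrite /hterm rmorph_f32term.
by rewrite !(rmorphB, rmorphN, rmorphD, rmorphM, rmorph_nat, rmorph1).
Qed.

Lemma rmorph_hrhs {F G : fieldType} (f : {rmorphism F -> G}) k m (b : F) :
  f (hrhs k m b) = hrhs k m (f b).
Proof.
rewrite /hrhs fmorph_div !rmorphM !rmorph_poch.
by rewrite !(rmorphD, rmorphM, rmorph_nat, rmorph1).
Qed.

Lemma hsum_hrhs_nat {F : numFieldType} k m j : (0 < k)%N ->
  hsum k m (j.+1%:R : F) = hrhs k m j.+1%:R.
Proof.
(* F need not be ordered, so the positive case is applied in rat and transported. *)
move=> k_gt0; rewrite -(rmorph_nat (ratr : {rmorphism rat -> F})).
by rewrite -rmorph_hsum -rmorph_hrhs hsum_hrhs_pos.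
Qed.

Lemma poly_eq_nat {F : numFieldType} (p q : {poly F}) :
  (forall j, p.[j.+1%:R] = q.[j.+1%:R]) -> p = q.
Proof.
move=> pq; apply/eqP; rewrite -subr_eq0; apply/eqP.
apply: (@roots_geq_poly_eq0 _ _ [seq j.+1%:R | j <- iota 0 (size (p - q))]).
- by apply/allP => _ /mapP[j _ ->]; rewrite /root hornerD hornerN pq subrr.
- by rewrite map_inj_uniq ?iota_uniq // => i j /eqP; rewrite eqr_nat => /eqP[].
- by rewrite size_map size_iota.
Qed.

Definition hsum_den {F : fieldType} (k m : nat) (b : F) : F :=
  poch (2 * b + 2 * m%:R + 2 * k%:R + 1) (2 * m).

Definition hrhs_den {F : fieldType} (k m : nat) (b : F) : F :=
  poch (1 + b + k%:R) (2 * m).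

Definition hsum_poly {F : fieldType} (k m : nat) : {poly F} :=
  \sum_(n < (2 * m).+1)
    (poch (- (2 * m%:R)) n * poch (1 + 2 * m%:R) n
       / poch (- (2 * m%:R) - 2 * k%:R) n / (n`!)%:R)%:P
    * poch 'X n
    * poch (2%:P * 'X + (2 * m%:R)%:P + (2 * k%:R)%:P + 1 + n%:R%:P) (2 * m - n)
    * poch (1 + 'X + k%:R%:P) (2 * m).

Definition hrhs_poly {F : fieldType} (k m : nat) : {poly F} :=
  (poch (1 + k%:R) (2 * m) / poch (1 + 2 * k%:R) (2 * m))%:P
  * poch (1 + 2%:P * 'X + (2 * k%:R)%:P) (2 * m)
  * poch (2%:P * 'X + (2 * m%:R)%:P + (2 * k%:R)%:P + 1) (2 * m).

Lemma horner_hsum_poly {F : numFieldType} k m (x : F) : hsum_den k m x != 0 ->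
  (hsum_poly k m).[x] = hsum k m x * hsum_den k m x * hrhs_den k m x.
Proof.
move=> nz_den; rewrite /hsum !mulr_suml horner_sum; apply: eq_bigr => -[n /= le_nm] _.
have split_den : hsum_den k m x
    = poch (2 * x + 2 * m%:R + 2 * k%:R + 1) n
      * poch (2 * x + 2 * m%:R + 2 * k%:R + 1 + n%:R) (2 * m - n).
  by rewrite /hsum_den -pochD subnKC.
have nz_n : poch (2 * x + 2 * m%:R + 2 * k%:R + 1) n != 0.
  by apply: contraNneq nz_den => eq0; rewrite split_den eq0 mul0r.
rewrite !hornerE !horner_poch !hornerE split_den /hrhs_den /hterm /f32term expr1n invfM.
move: (poch (- (2 * m%:R) - 2 * k%:R) n)^-1 => c.
by field; rewrite nz_n natr_fact_neq0.
Qed.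

Lemma horner_hrhs_poly {F : numFieldType} k m (x : F) : hrhs_den k m x != 0 ->
  (hrhs_poly k m).[x] = hrhs k m x * hsum_den k m x * hrhs_den k m x.
Proof.
rewrite /hrhs_den => nz_den; rewrite !hornerE !horner_poch !hornerE /hrhs /hsum_den invfM.
move: (poch (1 + 2 * k%:R) (2 * m))^-1 => c.
by field; rewrite nz_den.
Qed.

Lemma hsum_den_nat_neq0 {F : numFieldType} k m j : hsum_den k m (j.+1%:R : F) != 0.
Proof.
rewrite /hsum_den (_ : _ + 1 = (2 * j.+1 + 2 * m + 2 * k)%N.+1%:R).
  exact: poch_nat_neq0.
by rewrite -[in RHS]natr1 !natrD !natrM; ring.
Qed.

Lemma hrhs_den_nat_neq0 {F : numFieldType} k m j : hrhs_den k m (j.+1%:R : F) != 0.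
Proof.
rewrite /hrhs_den (_ : 1 + _ + _ = (j.+1 + k)%N.+1%:R); first exact: poch_nat_neq0.
by rewrite -[in RHS]natr1 natrD; ring.
Qed.

Theorem hsum_hrhs {F : numFieldType} k m (b : F) : (0 < k)%N ->
  hsum_den k m b != 0 -> hrhs_den k m b != 0 -> hsum k m b = hrhs k m b.
Proof.
move=> k_gt0 nz_sum nz_rhs.
have polys_eq : hsum_poly k m = hrhs_poly k m :> {poly F}.
  apply: poly_eq_nat => j.
  by rewrite horner_hsum_poly ?horner_hrhs_poly ?hsum_hrhs_nat
    ?hsum_den_nat_neq0 ?hrhs_den_nat_neq0.
have := horner_hrhs_poly nz_rhs.
by rewrite -polys_eq horner_hsum_poly // => /(mulIf nz_rhs) /(mulIf nz_sum).
Qed.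

Theorem mainTheorem6 (R : realType) (m k : nat) (beta : R[i])
  (hm : (0 < m)%N) (hk : (0 < k)%N)
  (hbeta : ~ in_Z0minus beta)
  (hb2 : ~ in_Z0minus (2 * beta + (2 * m)%:R + (2 * k)%:R + 1)) :
  F32trunc (- (2 * m)%:R) (1 + (2 * m)%:R) beta
           (- (2 * m)%:R - (2 * k)%:R) (2 * beta + (2 * m)%:R + (2 * k)%:R + 1)
           1 (2 * m)
  = (poch (1 + 2 * beta + (2 * k)%:R) (2 * m) * poch (1 + k%:R) (2 * m))
    / (poch (1 + (2 * k)%:R) (2 * m) * poch (1 + beta + k%:R) (2 * m)).
Proof.
have nz_sum : hsum_den k m beta != 0.
  by have := poch_addn_neq0 0 (2 * m) hb2; rewrite addr0 !natrM.
have nz_rhs : hrhs_den k m beta != 0.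
  rewrite /hrhs_den (_ : 1 + beta + k%:R = beta + k.+1%:R); first exact: poch_addn_neq0.
  by rewrite -natr1; ring.
have := hsum_hrhs hk nz_sum nz_rhs.
by rewrite /hsum /hrhs /hterm -!natrM.
Qed.
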